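(* Let $\Gamma=(V,E)$ be a connected $G$-locally arc-transitive graph (with $G\leqslant\mathrm{Aut}(\Gamma)$), let $\{\alpha,\beta\}\in E$ and let $N\unlhd G$. Suppose that $\gcd(|N_\alpha|,|\Gamma(\alpha)|)=1=\gcd(|N_\beta|,|\Gamma(\beta)|)$. Then $N$ is semiregular on $V$.
   Context: Graphs are finite, simple and undirected. $N_\gamma$ is the stabilizer in $N$ of a vertex $\gamma$ and $\Gamma(\gamma)$ its set of neighbours. $\Gamma$ is $G$-locally arc-transitive if for every vertex $\gamma$ the stabilizer $G_\gamma$ acts transitively on $\Gamma(\gamma)$. $N$ is semiregular on $V$ if $N_\gamma=1$ for all $\gamma\in V$. *)

From mathcomp Require Import all_boot all_fingroup.
Import GroupScope.
Set Implicit Arguments. Unset Strict Implicit. Unset Printing Implicit Defensive.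

Definition simple_graph (V : finType) (e : rel V) : Prop :=
  symmetric e /\ irreflexive e.

Definition nbhd (V : finType) (e : rel V) (x : V) : {set V} := [set y | e x y].

Definition connected_graph (V : finType) (e : rel V) : Prop :=
  forall x y : V, connect e x y.

Definition graph_aut_group (V : finType) (e : rel V) (G : {group {perm V}}) : Prop :=
  forall g, g \in G -> forall x y : V, e (g x) (g y) = e x y.

Definition locally_arc_transitive (V : finType) (e : rel V) (G : {group {perm V}}) : Prop :=
  forall x : V, [transitive 'C_G[x | 'P], on nbhd e x | 'P].

Definition semiregular (V : finType) (N : {group {perm V}}) : Prop :=
  forall x : V, 'C_N[x | 'P] = 1%g.

From mathcomp Require Import all_boot all_fingroup.
Import GroupScope.
Set Implicit Arguments. Unset Strict Implicit. Unset Printing Implicit Defensive.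

(* For x ~ y, the stabiliser N_x is normal in G_x, which is transitive on
   Gamma(x); hence every N_x-orbit on Gamma(x) has length dividing both |N_x|
   and |Gamma(x)|, so N_x fixes Gamma(x) pointwise and N_x <= N_y.  The
   coprimality hypotheses spread from the arc (a, b) to every vertex, since
   by local arc-transitivity and connectivity every vertex lies in the
   G-orbit of a or of b.  Following a path, N_x then fixes every vertex. *)

Section CoprimeActions.
Variables (aT : finGroupType) (rT : finType) (to : {action aT &-> rT}).

Lemma coprime_trans_normal_astab (H K : {group aT}) (S : {set rT}) :
  [transitive H, on S | to] -> K <| H -> coprime #|K| #|S| ->
  K \subset 'C(S | to).
Proof.
move=> trHS /andP[sKH nKH] coKS; rewrite astabC; apply/subsetP=> y Sy.
rewrite -sub_astab1; set Hy := 'C_H[y | to].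
have nKHy : Hy \subset 'N(K) by apply: subset_trans (subsetIl _ _) nKH.
have dvd_S : #|K : Hy| %| #|S|.
  rewrite -(atransP trHS y Sy) card_orbit -indexMg -norm_joinEl //.
  by rewrite indexSg ?joing_subl // join_subG subsetIl.
have : #|K : Hy| == 1%N by rewrite -dvdn1 -(eqnP coKS) dvdn_gcd dvdn_indexg.
by rewrite indexg_eq1 => /subset_trans; apply; apply: subsetIr.
Qed.

Lemma astab1_normal (G N : {group aT}) x :
  N <| G -> 'C_N[x | to] <| 'C_G[x | to].
Proof.
case/andP=> sNG nNG; rewrite /normal setSI //=.
apply: normsI; first exact: subset_trans (subsetIl _ _) nNG.
exact: subset_trans (subsetIr _ _) (normG _).
Qed.

Lemma astab1_norm_act (N : {group aT}) x g :
  g \in 'N(N) -> 'C_N[to x g | to] = 'C_N[x | to] :^ g.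
Proof. by move=> nNg; rewrite astab1_act -{1}(normP nNg) -conjIg. Qed.

End CoprimeActions.

Section LocallyArcTransitive.
Variables (V : finType) (e : rel V) (G : {group {perm V}}).
Hypotheses (autG : graph_aut_group e G) (latG : locally_arc_transitive e G).

Lemma nbhd_aut g x : g \in G -> nbhd e (g x) = g @: nbhd e x.
Proof.
move=> Gg; apply/setP=> z; rewrite inE; apply/idP/imsetP=> [ez | [w]].
  by exists (g^-1 z); rewrite ?permKV // inE -(autG Gg) permKV.
by rewrite inE => ew ->; rewrite autG.
Qed.

Lemma card_nbhd_aut g x : g \in G -> #|nbhd e (g x)| = #|nbhd e x|.
Proof. by move=> Gg; rewrite nbhd_aut // card_imset //; apply: perm_inj. Qed.

Lemma adj_orbit c d u v :
  e c d -> u \in orbit 'P G c -> e u v -> v \in orbit 'P G d.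
Proof.
move=> ecd /orbitP[g Gg <-] euv.
have ed : d \in nbhd e c by rewrite inE.
have : g^-1 v \in nbhd e c by rewrite inE -(autG Gg) permKV.
rewrite -(atransP (latG c) _ ed) => /orbitP[h /setIP[Gh _] /= /[!apermE] hd].
apply/orbitP; exists (h * g); first by rewrite groupM.
by rewrite /= apermE permM hd permKV.
Qed.

Lemma orbitU_arc_cover a b v :
  symmetric e -> connected_graph e -> e a b ->
  v \in orbit 'P G a :|: orbit 'P G b.
Proof.
move=> sym_e conn eab; have eba : e b a by rewrite sym_e.
set S := _ :|: _; have clS : closed e (mem S).
  apply: intro_closed; first exact: sym_connect_sym.
  move=> u w euw; rewrite !inE => /orP[ua | ub].
    by rewrite (adj_orbit eab ua euw) orbT.
  by rewrite (adj_orbit eba ub euw).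
by rewrite -(closed_connect clS (conn a v)) inE orbit_refl.
Qed.

Variable N : {group {perm V}}.
Hypothesis nNG : N <| G.

Lemma coprime_astab1_nbhd_aut g x : g \in G ->
  coprime #|'C_N[g x | 'P]| #|nbhd e (g x)| =
  coprime #|'C_N[x | 'P]| #|nbhd e x|.
Proof.
move=> Gg; have nNg : g \in 'N(N) by apply: subsetP (normal_norm nNG) g Gg.
by rewrite -[g x]apermE astab1_norm_act // cardJg card_nbhd_aut.
Qed.

Lemma astab1_sub_adj x y :
  coprime #|'C_N[x | 'P]| #|nbhd e x| -> e x y ->
  'C_N[x | 'P] \subset 'C_N[y | 'P].
Proof.
move=> coNx exy; rewrite subsetI subsetIl /=.
have Cx := coprime_trans_normal_astab (latG x) (astab1_normal 'P x nNG) coNx.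
by apply: subset_trans Cx _; apply: astabS; rewrite sub1set inE.
Qed.

Lemma astab1_sub_connected x y :
  symmetric e -> connected_graph e ->
  (forall v, coprime #|'C_N[v | 'P]| #|nbhd e v|) ->
  'C_N[x | 'P] \subset 'C_N[y | 'P].
Proof.
move=> sym_e conn coN.
have clC : closed e [pred v | 'C_N[x | 'P] \subset 'C_N[v | 'P]].
  apply: intro_closed; first exact: sym_connect_sym.
  by move=> u v euv /subset_trans; apply; apply: astab1_sub_adj.
by have := closed_connect clC (conn x y); rewrite !inE subxx => <-.
Qed.

End LocallyArcTransitive.

Theorem lemma2p4 (V : finType) (e : rel V) (G N : {group {perm V}}) (a b : V) :
  simple_graph e ->
  connected_graph e ->
  graph_aut_group e G ->
  locally_arc_transitive e G ->
  e a b ->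
  N <| G ->
  coprime #|'C_N[a | 'P]| #|nbhd e a| ->
  coprime #|'C_N[b | 'P]| #|nbhd e b| ->
  semiregular N.
Proof.
move=> [sym_e _] conn autG latG eab nNG coNa coNb.
have coN v : coprime #|'C_N[v | 'P]| #|nbhd e v|.
  case/setUP: (orbitU_arc_cover autG latG v sym_e conn eab) => /orbitP[g Gg <-];
    by rewrite /= apermE (coprime_astab1_nbhd_aut autG nNG).
move=> x; apply/trivgP; apply: (subset_trans _ (perm_faithful N)).
rewrite subsetI subsetIl astabC; apply/subsetP=> y _; rewrite -sub_astab1.
exact: subset_trans (astab1_sub_connected latG nNG x y sym_e conn coN) (subsetIr _ _).
Qed.
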